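(* Let $\mathcal{X}$ be a finite set, $\pi$ a probability mass function on $\mathcal{X}$ with $\pi(x)>0$ for all $x$, and let a group $\mathcal{G}$ act on $\mathcal{X}$, with orbits $\mathcal{O}(x)=\{gx:g\in\mathcal{G}\}$. Let $G$, $M$, $B$ be the Gibbs, Metropolis–Hastings and Barker orbit kernels associated with this same action (defined below). If $M$ does not have a deterministic 2-cycle on any of its orbits, then $\lim_{i\to\infty} M^i = G$. Moreover, $\lim_{i\to\infty}B^i=G$.
   Context: The Gibbs orbit kernel is $G(x,y)=\pi(y)/\pi(\mathcal{O}(x))$ if $y\in\mathcal{O}(x)$ and $0$ otherwise, where $\pi(\mathcal{O}(x))=\sum_{z\in\mathcal{O}(x)}\pi(z)$. The Metropolis–Hastings orbit kernel is $M(x,y)=\frac{1}{|\mathcal{O}(x)|-1}\min\{1,\pi(y)/\pi(x)\}$ for $y\in\mathcal{O}(x)$, $y\neq x$; $M(x,y)=0$ for $y\notin\mathcal{O}(x)$; and $M(x,x)=1-\sum_{y\ne x}M(x,y)$ (so $M(x,x)=1$ if $|\mathcal{O}(x)|=1$). The Barker orbit kernel $B$ is defined identically with $\min\{1,\pi(y)/\pi(x)\}$ replaced by $\pi(y)/(\pi(x)+\pi(y))$. Each of these kernels is block diagonal with respect to the orbits. ''$M$ has a deterministic 2-cycle on an orbit'' means that the block of $M$ on that orbit equals $\begin{pmatrix}0&1\\1&0\end{pmatrix}$. *)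

From HB Require Import structures.
From mathcomp Require Import all_boot all_order all_algebra.
From mathcomp Require Import all_classical all_reals all_analysis.
Set Implicit Arguments. Unset Strict Implicit. Unset Printing Implicit Defensive.
Import Order.TTheory GRing.Theory Num.Theory.
Local Open Scope ring_scope.

Definition is_group_action (Gt X : Type) (mul : Gt -> Gt -> Gt) (one : Gt)
  (inv : Gt -> Gt) (act : Gt -> X -> X) : Prop :=
  [/\ (forall a b c, mul a (mul b c) = mul (mul a b) c),
      (forall a, mul one a = a /\ mul a one = a),
      (forall a, mul (inv a) a = one /\ mul a (inv a) = one),
      (forall x, act one x = x) &
      (forall a b x, act (mul a b) x = act a (act b x))].

Definition positive_pmf (R : realType) (X : finType) (pi : X -> R) : Prop :=
  (forall x, 0 < pi x) /\ \sum_(x : X) pi x = 1.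

Definition orbit_of (Gt : Type) (X : finType) (act : Gt -> X -> X) (x : X)
  : {set X} := [set y | `[< exists g, act g x = y >]].

Definition kmul (R : realType) (X : finType) (K L : X -> X -> R) : X -> X -> R :=
  fun x y => \sum_(z : X) K x z * L z y.

Fixpoint kpow (R : realType) (X : finType) (K : X -> X -> R) (n : nat)
  : X -> X -> R :=
  match n with
  | 0%N => fun x y => (x == y)%:R
  | n'.+1 => kmul (kpow K n') K
  end.

Section Kernels.
Variables (R : realType) (X : finType) (Gt : Type) (act : Gt -> X -> X)
  (pi : X -> R).

Local Notation O := (orbit_of act).

Definition gibbs_kernel : X -> X -> R := fun x y =>
  if y \in O x then pi y / (\sum_(z in O x) pi z) else 0.

Definition orbit_prop_kernel (acc : X -> X -> R) : X -> X -> R := fun x y =>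
  if (y \in O x) && (y != x) then (#|O x|.-1)%:R^-1 * acc x y else 0.

Definition orbit_kernel (acc : X -> X -> R) : X -> X -> R := fun x y =>
  if y == x then 1 - \sum_(z | z != x) orbit_prop_kernel acc x z
  else orbit_prop_kernel acc x y.

Definition mh_kernel : X -> X -> R :=
  orbit_kernel (fun x y => Num.min 1 (pi y / pi x)).

Definition barker_kernel : X -> X -> R :=
  orbit_kernel (fun x y => pi y / (pi x + pi y)).

End Kernels.

Definition det_2cycle_on (R : realType) (X : finType) (K : X -> X -> R)
  (O : {set X}) : Prop :=
  #|O| = 2%N /\ (forall y z, y \in O -> z \in O -> K y z = (y != z)%:R).

From HB Require Import structures.
From mathcomp Require Import all_boot all_order all_algebra.
From mathcomp Require Import all_classical all_reals all_analysis.
From mathcomp Require Import ring lra.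
Set Implicit Arguments. Unset Strict Implicit. Unset Printing Implicit Defensive.
Import Order.TTheory GRing.Theory Num.Theory.
Import numFieldNormedType.Exports.
Local Open Scope classical_set_scope.
Local Open Scope ring_scope.

(* Each orbit kernel K is block diagonal over the orbits, stochastic, reversible
   with respect to pi, and positive off the diagonal inside an orbit.  On an
   orbit O the two-step kernel K^2 is then positive, unless K swaps the two
   points of a two-point orbit, so Doeblin's argument makes the oscillation of
   x |-> K^n(x, y) over O decay geometrically.  Stationarity of pi gives
   sum_(x in O) pi x * (K^n(x, y) - pi y / pi(O)) = 0, which traps the Gibbs
   value pi y / pi(O) inside that oscillation.  Barker acceptance probabilities
   are < 1, so its diagonal never vanishes and no swap can occur. *)

Section Kernels.
Variables (R : realType) (X : finType).
Implicit Types (K L M P : X -> X -> R) (O : {set X}).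

Lemma kmulA K L M : kmul (kmul K L) M = kmul K (kmul L M).
Proof.
apply/funext => x; apply/funext => y; rewrite /kmul.
under eq_bigr do rewrite big_distrl /=.
rewrite exchange_big /=; apply: eq_bigr => w _.
by rewrite big_distrr /=; apply: eq_bigr => z _; rewrite mulrA.
Qed.

Lemma kmul_kpow0l K L : kmul (kpow L 0) K = K.
Proof.
apply/funext => x; apply/funext => y; rewrite /kmul (bigD1 x) //= eqxx mul1r.
by rewrite big1 ?addr0 // => z; rewrite eq_sym => /negbTE ->; rewrite mul0r.
Qed.

Lemma kmul_kpow0r K L : kmul K (kpow L 0) = K.
Proof.
apply/funext => x; apply/funext => y; rewrite /kmul (bigD1 y) //= eqxx mulr1.
by rewrite big1 ?addr0 // => z /negbTE ->; rewrite mulr0.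
Qed.

Lemma kpowS K n : kpow K n.+1 = kmul K (kpow K n).
Proof.
elim: n => [|n IH].
  by change (kmul (kpow K 0) K = kmul K (kpow K 0)); rewrite kmul_kpow0l kmul_kpow0r.
by change (kmul (kpow K n.+1) K = kmul K (kmul (kpow K n) K)); rewrite IH kmulA.
Qed.

Lemma kpowSS K n : kpow K n.+2 = kmul (kmul K K) (kpow K n).
Proof. by rewrite !kpowS kmulA. Qed.

Lemma kpow_stationary K (pi : X -> R) n y :
  (forall y, \sum_x pi x * K x y = pi y) -> \sum_x pi x * kpow K n x y = pi y.
Proof.
move=> piK; elim: n y => [|n IH] y.
  rewrite (bigD1 y) //= eqxx mulr1 big1 ?addr0 // => x /negbTE ->.
  exact: mulr0.
rewrite -[RHS]piK /=; under eq_bigr do rewrite /kmul big_distrr /=.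
rewrite exchange_big /=; apply: eq_bigr => z _.
by rewrite -IH big_distrl /=; apply: eq_bigr => x _; rewrite mulrA.
Qed.

Lemma reversible_stationary K (pi : X -> R) :
  (forall x z, pi x * K x z = pi z * K z x) -> (forall x, \sum_z K x z = 1) ->
  forall y, \sum_x pi x * K x y = pi y.
Proof.
by move=> rev sum1 y; under eq_bigr do rewrite rev; rewrite -big_distrr /= sum1 mulr1.
Qed.

Definition block_stochastic K O : Prop :=
  [/\ forall x z, 0 <= K x z,
      forall x z, x \in O -> z \notin O -> K x z = 0 &
      forall x, x \in O -> \sum_z K x z = 1].

Lemma kpow_block_out K O n x y :
  (forall x z, x \in O -> z \notin O -> K x z = 0) ->
  x \in O -> y \notin O -> kpow K n x y = 0.
Proof.
move=> Kout xO yO; elim: n y yO => [|n IH] y yO /=.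
  by case: eqP yO => // <-; rewrite xO.
apply: big1 => z _; case: (boolP (z \in O)) => zO; first by rewrite Kout ?mulr0.
by rewrite IH ?mul0r.
Qed.

Lemma sum_block K O x (f : X -> R) :
  (forall x z, x \in O -> z \notin O -> K x z = 0) -> x \in O ->
  \sum_z K x z * f z = \sum_(z in O) K x z * f z.
Proof.
move=> Kout xO; rewrite (bigID (mem O)) /= [X in _ + X]big1 ?addr0 //.
by move=> z zO; rewrite Kout ?mul0r.
Qed.

Lemma block_stochastic_sum K O x :
  block_stochastic K O -> x \in O -> \sum_(z in O) K x z = 1.
Proof.
case=> _ Kout Ksum xO; rewrite -(Ksum x xO) [RHS](bigID (mem O)) /=.
by rewrite [X in _ = _ + X]big1 ?addr0 // => z; apply: Kout.
Qed.

Lemma block_stochastic_kmul K L O :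
  block_stochastic K O -> block_stochastic L O -> block_stochastic (kmul K L) O.
Proof.
move=> KO [L0 Lout Lsum]; have [K0 Kout _] := KO; split.
- by move=> x z; apply: sumr_ge0 => w _; apply: mulr_ge0.
- move=> x z xO zO; apply: big1 => w _; have [wO|wO] := boolP (w \in O).
    by rewrite Lout ?mulr0.
  by rewrite Kout ?mul0r.
- move=> x xO; rewrite /kmul exchange_big /= -(block_stochastic_sum KO xO).
  under eq_bigr do rewrite -big_distrr /=.
  rewrite (sum_block (fun w => \sum_z L w z) Kout xO).
  by apply: eq_bigr => w wO; rewrite Lsum ?mulr1.
Qed.

Lemma pair_block_diag_gt0 K x z :
  block_stochastic K [set x; z]%SET -> x != z ->
  ~ det_2cycle_on K [set x; z]%SET -> 0 < K x x + K z z.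
Proof.
move=> KO xz no2; have [K0 _ _] := KO; have zx : z != x by rewrite eq_sym.
have row a : a \in [set x; z]%SET -> K a x + K a z = 1.
  by move=> aO; rewrite -(block_stochastic_sum KO aO) big_setU1 ?big_set1 // inE.
have := row x (set21 x z); have := row z (set22 x z) => Kz Kx.
rewrite lt_def addr_ge0 // andbT; apply/negP => /eqP diag0; apply: no2.
have Kxx : K x x = 0 by have := K0 x x; have := K0 z z; lra.
have Kzz : K z z = 0 by have := K0 x x; have := K0 z z; lra.
split; first by rewrite cards2 xz.
move=> a b; rewrite !inE => /orP[]/eqP-> /orP[]/eqP->;
  rewrite ?eqxx ?Kxx ?Kzz ?xz ?zx //=; lra.
Qed.

Lemma kmul_self_gt0 K O x z :
  block_stochastic K O ->
  (forall a b, a \in O -> b \in O -> a != b -> 0 < K a b) ->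
  ~ det_2cycle_on K O -> x \in O -> z \in O -> 0 < kmul K K x z.
Proof.
move=> KO Kpos no2 xO zO; have [K0 _ _] := KO.
have term w : K x w * K w z <= kmul K K x z.
  by rewrite /kmul (bigD1 w) //= lerDl sumr_ge0 // => v _; apply: mulr_ge0.
have [Oxz | [w]] := set_0Vmem (O :\: [set x; z]%SET); last first.
  rewrite !inE negb_or => /andP[/andP[wx wz] wO].
  by apply: lt_le_trans (term w); rewrite mulr_gt0 ?Kpos // eq_sym.
have {}Oxz : O = [set x; z]%SET.
  apply/eqP; rewrite finset.eqEsubset -finset.setD_eq0 Oxz eqxx /=.
  by rewrite finset.subUset !finset.sub1set xO zO.
have [exz|xz] := eqVneq x z.
  subst z; have := block_stochastic_sum KO xO.
  rewrite Oxz finset.setUid big_set1 => Kxx.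
  by apply: lt_le_trans (term x); rewrite Kxx mulr1.
have diag : 0 < K x x + K z z by apply: pair_block_diag_gt0; rewrite -?Oxz.
have two_terms : K x x * K x z + K x z * K z z <= kmul K K x z.
  rewrite /kmul (bigD1 x) //= (bigD1 z) 1?eq_sym //= addrA lerDl.
  by apply: sumr_ge0 => v _; apply: mulr_ge0.
by have := Kpos x z xO zO xz; nra.
Qed.

Lemma fin_gt0_lower_bound (T : finType) (A : pred T) (f : T -> R) :
  {in A, forall t, 0 < f t} -> exists2 e, 0 < e & {in A, forall t, e <= f t}.
Proof.
move=> f0; exists (\big[Order.min/1]_(t | A t) f t).
  by apply: (big_ind (fun v => 0 < v)) => // a b a0 b0; rewrite lt_min a0.
by move=> t At; rewrite (bigD1 t) //= ge_min lexx.
Qed.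

Lemma doeblin_rate_ge0 P O e :
  block_stochastic P O -> (forall x z, x \in O -> z \in O -> e <= P x z) ->
  0 <= 1 - #|O|%:R * e.
Proof.
move=> PO Pe; rewrite subr_ge0; case: (set_0Vmem O) => [->|[x xO]].
  by rewrite cards0 mul0r.
rewrite mulr_natl -sumr_const -(block_stochastic_sum PO xO).
by apply: ler_sum => z zO; apply: Pe.
Qed.

Lemma block_stochastic_contract P O e (f : X -> R) m d :
  block_stochastic P O -> (forall x z, x \in O -> z \in O -> e <= P x z) ->
  (forall z, z \in O -> m <= f z <= m + d) ->
  exists m', forall x, x \in O ->
    m' <= \sum_z P x z * f z <= m' + (1 - #|O|%:R * e) * d.
Proof.
move=> PO Pe fb; have [_ Pout _] := PO.
exists (m + e * \sum_(z in O) (f z - m)) => x xO.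
have centre : \sum_z P x z * f z = m + \sum_(z in O) P x z * (f z - m).
  under [X in _ = _ + X]eq_bigr do rewrite mulrBr.
  rewrite sumrB -big_distrl /= (block_stochastic_sum PO xO) (sum_block f Pout xO).
  by rewrite mul1r addrC subrK.
have split_e : \sum_(z in O) P x z * (f z - m) =
    e * \sum_(z in O) (f z - m) + \sum_(z in O) (P x z - e) * (f z - m).
  by rewrite big_distrr -big_split /=; apply: eq_bigr => z _; ring.
have lo : 0 <= \sum_(z in O) (P x z - e) * (f z - m).
  apply: sumr_ge0 => z zO; have /andP[mf _] := fb z zO.
  by apply: mulr_ge0; rewrite subr_ge0 ?Pe.
have hi : \sum_(z in O) (P x z - e) * (f z - m) <= (1 - #|O|%:R * e) * d.
  rewrite mulr_natl -sumr_const -(block_stochastic_sum PO xO) -sumrB big_distrl /=.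
  apply: ler_sum => z zO; have /andP[_ fd] := fb z zO.
  by rewrite ler_wpM2l ?subr_ge0 ?Pe // lerBlDl.
rewrite centre split_e; apply/andP; split; lra.
Qed.

Lemma kpow_oscillation K O e y k n :
  block_stochastic K O -> (forall x z, x \in O -> z \in O -> e <= kmul K K x z) ->
  (2 * k <= n)%N -> exists m, forall x, x \in O ->
    m <= kpow K n x y <= m + (1 - #|O|%:R * e) ^+ k.
Proof.
move=> KO Ke; have [K0 _ _] := KO.
elim: k n => [|k IH] n.
  move=> _; rewrite expr0; elim: n => [|n [m hm]].
    by exists 0 => x _; rewrite add0r /=; case: (x == y); rewrite ?ler01 ?lexx.
  have K0O x z : x \in O -> z \in O -> 0 <= K x z by move=> _ _; apply: K0.
  have [m' hm'] := block_stochastic_contract KO K0O hm.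
  by exists m' => x xO; rewrite kpowS; move: (hm' x xO); rewrite mulr0 subr0 mulr1.
case: n => [|[|n]]; rewrite ?mulnS ?addSn ?add0n ?ltnS // => hn.
have [m hm] := IH n hn.
have [m' hm'] := block_stochastic_contract (block_stochastic_kmul KO KO) Ke hm.
by exists m' => x xO; rewrite kpowSS exprS; apply: hm'.
Qed.

Lemma weighted_mean_dist_le O (w f : X -> R) c m d x :
  x \in O -> (forall z, z \in O -> 0 < w z) ->
  (forall z, z \in O -> m <= f z <= m + d) ->
  \sum_(z in O) w z * (f z - c) = 0 -> `|c - f x| <= d.
Proof.
move=> xO w0 fb hs.
have W0 : 0 < \sum_(z in O) w z.
  rewrite (bigD1 x) //= ltr_pwDl ?w0 // sumr_ge0 // => z /andP[zO _].
  exact: ltW (w0 z zO).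
have hc : \sum_(z in O) w z * (f z - m) = (c - m) * \sum_(z in O) w z.
  transitivity (\sum_(z in O) w z * (f z - c) + (c - m) * \sum_(z in O) w z).
    by rewrite big_distrr -big_split /=; apply: eq_bigr => z _; ring.
  by rewrite hs add0r.
have lo : 0 <= c - m.
  rewrite -(pmulr_lge0 _ W0) -hc; apply: sumr_ge0 => z zO.
  by have /andP[mf _] := fb z zO; rewrite mulr_ge0 ?subr_ge0 // ltW ?w0.
have hi : c - m <= d.
  rewrite -(ler_pM2r W0) -hc big_distrr /=; apply: ler_sum => z zO.
  have /andP[_ fd] := fb z zO.
  by rewrite [d * _]mulrC ler_wpM2l ?(ltW (w0 z zO)) // lerBlDl.
have /andP[mf fd] := fb x xO.
rewrite ler_norml; apply/andP; split; lra.
Qed.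

Lemma kpow_cvg_block K O (w : X -> R) c x y :
  block_stochastic K O ->
  (forall x z, x \in O -> z \in O -> 0 < kmul K K x z) ->
  (forall z, z \in O -> 0 < w z) ->
  (forall n, \sum_(z in O) w z * (kpow K n z y - c) = 0) ->
  x \in O -> (fun n => kpow K n x y) @ \oo --> c.
Proof.
move=> KO K2pos w0 hs xO.
have [e e0 Ke] : exists2 e, 0 < e &
    forall a b, a \in O -> b \in O -> e <= kmul K K a b.
  have [|e e0 Ke] := @fin_gt0_lower_bound _
    [pred p : X * X | (p.1 \in O) && (p.2 \in O)] (fun p => kmul K K p.1 p.2).
    by move=> [a b] /andP[aO bO]; apply: K2pos.
  by exists e => // a b aO bO; apply: (Ke (a, b)); rewrite inE /= aO.
set rho := 1 - #|O|%:R * e.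
have rho0 : 0 <= rho := doeblin_rate_ge0 (block_stochastic_kmul KO KO) Ke.
have rho1 : `|rho| < 1.
  rewrite ger0_norm // ltrBlDr ltrDl mulr_gt0 // ltr0n.
  by apply/card_gt0P; exists x.
have bnd k n : (2 * k <= n)%N -> `|c - kpow K n x y| <= rho ^+ k.
  move=> hn; have [m hm] := kpow_oscillation y KO Ke hn.
  exact: weighted_mean_dist_le xO w0 hm (hs n).
apply/cvgrPdist_le => eps eps0.
have /cvgrPdist_lt /(_ eps eps0) [N _ HN] := cvg_expr rho1.
exists (2 * N)%N => // n /= hn; apply: le_trans (bnd N n hn) _.
have := HN N (leqnn N); rewrite /= sub0r normrN ger0_norm ?exprn_ge0 //.
exact: ltW.
Qed.

End Kernels.

Section Orbits.
Variables (Gt : Type) (X : finType) (mul : Gt -> Gt -> Gt) (one : Gt)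
  (inv : Gt -> Gt) (act : Gt -> X -> X).
Hypothesis actG : is_group_action mul one inv act.
Local Notation O := (orbit_of act).

Lemma orbit_refl x : x \in O x.
Proof. by case: actG => _ _ _ act1 _; rewrite inE; apply/asboolP; exists one. Qed.

Lemma orbit_sym x y : y \in O x -> x \in O y.
Proof.
case: actG => _ _ mulV act1 actM; rewrite !inE => -[g <-].
by exists (inv g); rewrite -actM; case: (mulV g) => -> _.
Qed.

Lemma orbit_trans x y z : y \in O x -> z \in O y -> z \in O x.
Proof.
case: actG => _ _ _ _ actM; rewrite !inE => -[g <-] [h <-].
by exists (mul h g); rewrite actM.
Qed.

Lemma orbit_eq x y : y \in O x -> O y = O x.
Proof.
move=> yx; apply/setP => z; apply/idP/idP; first exact: orbit_trans.
exact: orbit_trans (orbit_sym yx).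
Qed.

Section OrbitKernel.
Variables (R : realType) (pi : X -> R) (acc : X -> X -> R).
Hypothesis pi_gt0 : forall x, 0 < pi x.
Hypothesis acc_gt0 : forall x z, 0 < acc x z.
Hypothesis acc_le1 : forall x z, acc x z <= 1.
Hypothesis acc_reversible : forall x z, pi x * acc x z = pi z * acc z x.
Local Notation K := (orbit_kernel act acc).

Lemma card_orbitD1 x : #|O x :\ x| = #|O x|.-1.
Proof. by rewrite (cardsD1 x (O x)) orbit_refl. Qed.

Lemma orbit_prop_sum x : \sum_(z | z != x) orbit_prop_kernel act acc x z =
  #|O x :\ x|%:R^-1 * \sum_(z in O x :\ x) acc x z.
Proof.
rewrite card_orbitD1 big_distrr [RHS]big_mkcond [LHS]big_mkcond /=.
by apply: eq_bigr => z _; rewrite /orbit_prop_kernel in_setD1 andbC; case: (z != x).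
Qed.

Lemma orbit_kernel_diag x :
  K x x = 1 - #|O x :\ x|%:R^-1 * \sum_(z in O x :\ x) acc x z.
Proof. by rewrite /orbit_kernel eqxx orbit_prop_sum. Qed.

Lemma orbit_kernel_offdiag x z : z != x -> K x z = orbit_prop_kernel act acc x z.
Proof. by rewrite /orbit_kernel => /negbTE ->. Qed.

Lemma orbit_kernel_diag_ge0 x : 0 <= K x x.
Proof.
rewrite orbit_kernel_diag subr_ge0; have [->|n_gt0] := posnP #|O x :\ x|.
  by rewrite invr0 mul0r.
rewrite ler_pdivrMl ?ltr0n // mulr1 -sum1_card natr_sum.
exact: ler_sum.
Qed.

Lemma orbit_kernel_gt0 x z : z \in O x -> z != x -> 0 < K x z.
Proof.
move=> zO zx; rewrite orbit_kernel_offdiag // /orbit_prop_kernel zO zx.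
rewrite mulr_gt0 // invr_gt0 ltr0n -card_orbitD1.
by apply/card_gt0P; exists z; rewrite in_setD1 zx.
Qed.

Lemma orbit_kernel_block x : block_stochastic K (O x).
Proof.
split.
- move=> a b; have [->|ba] := eqVneq b a; first exact: orbit_kernel_diag_ge0.
  rewrite orbit_kernel_offdiag // /orbit_prop_kernel; case: ifP => // _.
  by rewrite mulr_ge0 ?invr_ge0 // ltW.
- move=> a b aO bO; have ba : b != a by apply: contraNneq bO => ->.
  by rewrite orbit_kernel_offdiag // /orbit_prop_kernel (orbit_eq aO) (negbTE bO).
- move=> a _; rewrite (bigD1 a) //= {1}/orbit_kernel eqxx.
  by under [X in _ + X]eq_bigr => b ba do rewrite orbit_kernel_offdiag //; rewrite subrK.
Qed.

Lemma orbit_kernel_reversible x z : pi x * K x z = pi z * K z x.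
Proof.
have [->//|zx] := eqVneq z x; have xz : x != z by rewrite eq_sym.
rewrite !orbit_kernel_offdiag // /orbit_prop_kernel zx xz !andbT.
have [zO|zO] := boolP (z \in O x).
  by rewrite (orbit_sym zO) (orbit_eq zO) mulrCA acc_reversible mulrCA.
by rewrite ifN ?mulr0 //; apply: contra zO; apply: orbit_sym.
Qed.

Lemma orbit_kpow_stationary x y n :
  y \in O x -> \sum_(z in O x) pi z * kpow K n z y = pi y.
Proof.
move=> yO; have K_sum1 a : \sum_z K a z = 1.
  by have [_ _ ->] := orbit_kernel_block a; rewrite ?orbit_refl.
rewrite -(kpow_stationary n y (reversible_stationary orbit_kernel_reversible K_sum1)).
rewrite [RHS](bigID (mem (O x))) /= [X in _ = _ + X]big1 ?addr0 // => z zO.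
have [_ Kout _] := orbit_kernel_block z.
rewrite (kpow_block_out _ Kout (orbit_refl z)) ?mulr0 //.
by apply: contra zO => yz; apply: orbit_trans yO (orbit_sym yz).
Qed.

Lemma orbit_kernel_cvg_gibbs : (forall x, ~ det_2cycle_on K (O x)) ->
  forall x y, (fun n => kpow K n x y) @ \oo --> gibbs_kernel act pi x y.
Proof.
move=> no2 x y; rewrite /gibbs_kernel.
have [yO|yO] := boolP (y \in O x); last first.
  have [_ Kout _] := orbit_kernel_block x.
  under eq_fun do rewrite (kpow_block_out _ Kout (orbit_refl x) yO).
  exact: cvg_cst.
set Z := \sum_(z in O x) pi z.
have Z_gt0 : 0 < Z.
  rewrite /Z (bigD1 x) ?orbit_refl //= ltr_pwDl ?sumr_ge0 // => z _.
  exact: ltW.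
apply: (kpow_cvg_block (w := pi) (orbit_kernel_block x)) (orbit_refl x).
- move=> a b aO bO; apply: kmul_self_gt0 (orbit_kernel_block x) _ (no2 x) aO bO.
  move=> c d cO dO dc; apply: orbit_kernel_gt0; last by rewrite eq_sym.
  by rewrite (orbit_eq cO).
- by move=> z _.
- move=> n; under eq_bigr do rewrite mulrBr.
  by rewrite sumrB -big_distrl /= orbit_kpow_stationary // -/Z mulrCA divff ?mulr1 ?subrr ?gt_eqF.
Qed.

Lemma orbit_kernel_no_2cycle : (forall x z, acc x z < 1) ->
  forall x, ~ det_2cycle_on K (O x).
Proof.
move=> acc_lt1 x [card2 K01].
have /cards1P[w Ow] : #|O x :\ x| == 1%N by rewrite card_orbitD1 card2.
have := K01 x x (orbit_refl x) (orbit_refl x).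
rewrite orbit_kernel_diag Ow big_set1 cards1 invr1 mul1r eqxx /=.
by have := acc_lt1 x w; lra.
Qed.

End OrbitKernel.

End Orbits.

Section Acceptance.
Variables (R : realType) (X : finType) (pi : X -> R).
Hypothesis pi_gt0 : forall x, 0 < pi x.

Lemma mh_acceptance_gt0 x z : 0 < Num.min 1 (pi z / pi x).
Proof. by rewrite lt_min ltr01 divr_gt0. Qed.

Lemma mh_acceptance_le1 x z : Num.min 1 (pi z / pi x) <= 1.
Proof. by rewrite ge_min lexx. Qed.

Lemma mh_acceptance_reversible x z :
  pi x * Num.min 1 (pi z / pi x) = pi z * Num.min 1 (pi x / pi z).
Proof.
have sym a b : pi a * Num.min 1 (pi b / pi a) = Num.min (pi a) (pi b).
  by rewrite minr_pMr ?ltW // mulr1 mulrC divfK ?gt_eqF.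
by rewrite !sym minC.
Qed.

Lemma barker_acceptance_gt0 x z : 0 < pi z / (pi x + pi z).
Proof. by rewrite divr_gt0 ?addr_gt0. Qed.

Lemma barker_acceptance_lt1 x z : pi z / (pi x + pi z) < 1.
Proof. by rewrite ltr_pdivrMr ?addr_gt0 // mul1r ltrDr. Qed.

Lemma barker_acceptance_reversible x z :
  pi x * (pi z / (pi x + pi z)) = pi z * (pi x / (pi z + pi x)).
Proof. by rewrite addrC mulrCA. Qed.

End Acceptance.

Theorem proposition2p3 (R : realType) (X : finType) (Gt : Type)
  (mul : Gt -> Gt -> Gt) (one : Gt) (inv : Gt -> Gt) (act : Gt -> X -> X)
  (pi : X -> R) :
  is_group_action mul one inv act ->
  positive_pmf pi ->
  ((forall x : X, ~ det_2cycle_on (mh_kernel act pi) (orbit_of act x)) ->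
     forall x y : X,
       (fun i : nat => kpow (mh_kernel act pi) i x y) @ \oo
         --> gibbs_kernel act pi x y)
  /\ (forall x y : X,
       (fun i : nat => kpow (barker_kernel act pi) i x y) @ \oo
         --> gibbs_kernel act pi x y).
Proof.
move=> actG [pi_gt0 _]; split.
  exact: (orbit_kernel_cvg_gibbs actG pi_gt0 (mh_acceptance_gt0 pi_gt0)
    (mh_acceptance_le1 pi) (mh_acceptance_reversible pi_gt0)).
apply: (orbit_kernel_cvg_gibbs actG pi_gt0 (barker_acceptance_gt0 pi_gt0)
  (fun x z => ltW (barker_acceptance_lt1 pi_gt0 x z))
  (barker_acceptance_reversible pi)) => x.
exact: (orbit_kernel_no_2cycle actG (barker_acceptance_lt1 pi_gt0)).
Qed.
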